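(* For every positively oriented $J$-basis $E$ of $\mathbb{R}^{2n,2n-1}$, the closed crooked halfspace $\overline{\mathcal{H}}_E$ is the topological closure of the open crooked halfspace $\mathcal{H}_E$.
   Context: $\mathbb{R}^{2n,2n-1}$ is $\mathbb{R}^{4n-1}$ with form $v^TJw$, $J$ antidiagonal with $J_{i,4n-i}=(-1)^i$; a $J$-basis is one in which the Gram matrix is $J$. For a nonzero vector $v$ with coordinates $(v_1,\dots,v_{4n-1})$ in the basis $E$, the upper sign variation $S^+_E(v)$ is the number of sign changes in the coordinate sequence when a sign is assigned to each zero coordinate so as to maximize this number, and the lower sign variation $S^-_E(v)$ is the number of sign changes when signs of zero coordinates are chosen to minimize it (equivalently, the number of sign changes among nonzero coordinates). The open crooked halfspace is $\mathcal{H}_E=\{v: S^+_E(v)\le 2n-1$, and in case of equality the sign of the last coordinate used in computing $S^+_E$ is positive$\}$; the closed crooked halfspace is $\overline{\mathcal{H}}_E=\{v: S^-_E(v)\le 2n-1$, and in case of equality the last nonzero coordinate is positive$\}$. *)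

From HB Require Import structures.
From mathcomp Require Import all_boot all_order all_algebra.
From mathcomp Require Import all_classical all_reals all_analysis.
Set Implicit Arguments. Unset Strict Implicit. Unset Printing Implicit Defensive.
Import Order.TTheory GRing.Theory Num.Theory.
Local Open Scope ring_scope.

(* Dimension of R^{2n,2n-1}: m = 4n-1; indices are 0-based ('I_m). *)
Definition dimn (n : nat) : nat := (4 * n - 1)%N.

(* J antidiagonal: J_{i,4n-i} = (-1)^i for 1-based i; 0-based i0 = i-1,
   j0 = 4n-i-1, so J i0 j0 = (-1)^(i0+1) when i0 + j0 = 4n-2. *)
Definition Jmx (R : realType) (n : nat) : 'M[R]_(dimn n) :=
  \matrix_(i, j) (if (i + j == dimn n - 1)%N then (-1) ^+ (i.+1) else 0).

(* E : rows are the basis vectors e_1 .. e_m.  Gram matrix (e_i^T J e_j) = J. *)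
Definition is_J_basis (R : realType) (n : nat) (E : 'M[R]_(dimn n)) : Prop :=
  E \in unitmx /\ E *m Jmx R n *m E^T = Jmx R n.

Definition pos_oriented (R : realType) (m : nat) (E : 'M[R]_m) : Prop :=
  0 < \det E.

Definition coords (R : realType) (m : nat) (E : 'M[R]_m) (v : 'rV[R]_m) : 'rV[R]_m :=
  v *m invmx E.

Definition compat (R : realType) (m : nat) (c : 'rV[R]_m) (s : {ffun 'I_m -> bool}) : bool :=
  [forall i, ((0 < c 0 i) ==> s i) && ((c 0 i < 0) ==> ~~ s i)].

Definition changes (m : nat) (s : {ffun 'I_m -> bool}) : nat :=
  #|[set i : 'I_m | [exists j : 'I_m, (val j == i.+1) && (s i != s j)]]|.

Definition Splus (R : realType) (m : nat) (c : 'rV[R]_m) : nat :=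
  \max_(s : {ffun 'I_m -> bool} | compat c s) changes s.

Definition Sminus (R : realType) (m : nat) (c : 'rV[R]_m) : nat :=
  \big[minn/m]_(s : {ffun 'I_m -> bool} | compat c s) changes s.

Definition last_plus_pos (R : realType) (m : nat) (c : 'rV[R]_m) : Prop :=
  exists s : {ffun 'I_m -> bool}, [/\ compat c s, changes s = Splus c &
    forall i : 'I_m, (i.+1 = m)%N -> s i].

Definition last_nonzero_pos (R : realType) (m : nat) (c : 'rV[R]_m) : Prop :=
  exists i : 'I_m, 0 < c 0 i /\ forall j : 'I_m, (i < j)%N -> c 0 j = 0.

Definition open_crooked_halfspace (R : realType) (n : nat) (E : 'M[R]_(dimn n))
  : set 'rV[R]_(dimn n) :=
  [set v | (Splus (coords E v) <= 2 * n - 1)%N /\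
           (Splus (coords E v) = (2 * n - 1)%N -> last_plus_pos (coords E v))].

Definition closed_crooked_halfspace (R : realType) (n : nat) (E : 'M[R]_(dimn n))
  : set 'rV[R]_(dimn n) :=
  [set v | (Sminus (coords E v) <= 2 * n - 1)%N /\
           (Sminus (coords E v) = (2 * n - 1)%N -> last_nonzero_pos (coords E v))].

From HB Require Import structures.
From mathcomp Require Import all_boot all_order all_algebra.
From mathcomp Require Import all_classical all_reals all_analysis.
From mathcomp Require Import zify.

(* Write c for the coordinate vector of v.  Near v every nonzero coordinate
   keeps its sign, so a sign pattern of a nearby x is also a sign pattern of c,
   whence S^-(c) <= S^+(x): the closure of the open halfspace lies in the closed
   one.  Conversely, give the zero coordinates of c the signs of a pattern
   realising S^-(c); pushing v slightly in that direction yields vectors with no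
   zero coordinate, whose only sign pattern is that one, so S^+ = S^-(c).  The
   conditions on the last sign match because a minimal pattern must end with the
   sign of the last nonzero coordinate: otherwise, freezing the pattern after
   that coordinate would remove a sign change. *)

Set Implicit Arguments. Unset Strict Implicit. Unset Printing Implicit Defensive.
Import Order.TTheory GRing.Theory Num.Theory.
Local Open Scope classical_set_scope.
Local Open Scope ring_scope.

Section SignVariation.
Variables (R : realType) (m : nat).
Implicit Types (c : 'rV[R]_m) (s t : {ffun 'I_m -> bool}).

Definition sign_changes s : {set 'I_m} :=
  [set i : 'I_m | [exists j : 'I_m, (val j == i.+1) && (s i != s j)]].

Lemma changesE s : changes s = #|sign_changes s|.
Proof. by []. Qed.

Lemma compatP c s :
  compat c s <-> forall i, (0 < c 0 i -> s i) /\ (c 0 i < 0 -> ~~ s i).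
Proof.
split=> [/forallP cs i | cs]; first by have /andP[/implyP ? /implyP ?] := cs i.
by apply/forallP => i; have [? ?] := cs i; apply/andP; split; apply/implyP.
Qed.

Definition sign_pattern c : {ffun 'I_m -> bool} := [ffun i => 0 < c 0 i].

Lemma compat_sign_pattern c : compat c (sign_pattern c).
Proof. by apply/compatP => i; rewrite ffunE; split=> // /ltW; rewrite leNgt. Qed.

Lemma changes_le s : (changes s <= m)%N.
Proof. by rewrite changesE -[X in (_ <= X)%N]card_ord max_card. Qed.

Lemma changes_const b : changes ([ffun=> b] : {ffun 'I_m -> bool}) = 0%N.
Proof.
apply/eqP; rewrite cards_eq0; apply/eqP/setP => i; rewrite !inE.
by apply/negbTE/existsP => -[j]; rewrite !ffunE eqxx andbF.
Qed.

Lemma Sminus_le c s : compat c s -> (Sminus c <= changes s)%N.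
Proof.
by move=> cs; rewrite /Sminus -minEnat; exact: (bigmin_le_cond m (@changes m) cs).
Qed.

Lemma Sminus_attained c : exists2 s, compat c s & changes s = Sminus c.
Proof.
rewrite /Sminus -minEnat (@bigmin_eq_arg _ _ _ m (sign_pattern c) (compat c)
  (@changes m) (compat_sign_pattern c)); last by move=> *; exact: changes_le.
by case: arg_minP => [|s cs _]; [exact: compat_sign_pattern | exists s].
Qed.

Lemma changes_le_Splus c s : compat c s -> (changes s <= Splus c)%N.
Proof. exact: leq_bigmax_cond. Qed.

Definition keeps_signs c c' :=
  forall i, (0 < c 0 i -> 0 < c' 0 i) /\ (c 0 i < 0 -> c' 0 i < 0).

Lemma compat_keeps_signs c c' s : keeps_signs c c' -> compat c' s -> compat c s.
Proof.
move=> cc' /compatP c's; apply/compatP => i.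
have [pos neg] := cc' i; have [pos' neg'] := c's i.
by split=> [/pos/pos' | /neg/neg'].
Qed.

Definition freeze_after s (p : 'I_m) : {ffun 'I_m -> bool} :=
  [ffun i : 'I_m => if (i <= p)%N then s i else s p].

Lemma freeze_after_ge s (p j : 'I_m) : (p <= j)%N -> freeze_after s p j = s p.
Proof.
move=> pj; rewrite ffunE; case: leqP => // jp.
by congr (s _); apply/val_inj/eqP; rewrite eqn_leq jp pj.
Qed.

Lemma compat_freeze_after c s (p : 'I_m) :
  compat c s -> (forall j : 'I_m, (p < j)%N -> c 0 j = 0) ->
  compat c (freeze_after s p).
Proof.
move=> /compatP cs vanish; apply/compatP => i; rewrite ffunE.
by case: leqP => [_ | /vanish ->]; [exact: cs | rewrite ltxx].
Qed.

Lemma sign_changes_freeze_after s p :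
  sign_changes (freeze_after s p) \subset sign_changes s.
Proof.
apply/fintype.subsetP => i; rewrite !inE => /existsP[j /andP[/eqP ji]].
have [ip | pi] := leqP i.+1 p.
  rewrite !ffunE (ltnW ip) ji ip => sij.
  by apply/existsP; exists j; rewrite ji eqxx.
rewrite !freeze_after_ge ?eqxx // ?ji //; exact: ltnW.
Qed.

Lemma changes_freeze_after_lt s (p l : 'I_m) :
  l.+1 = m -> s l != s p -> (changes (freeze_after s p) < changes s)%N.
Proof.
move=> lm slp; rewrite !changesE; apply: proper_card; apply/properP.
split; first exact: sign_changes_freeze_after.
pose same_sign_after_p (i : 'I_m) := (p <= i)%N && (s i == s p).
have sp : same_sign_after_p p by rewrite /same_sign_after_p leqnn eqxx.
(* The last index still carrying the sign s p is a change of s, but not of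
   the frozen pattern. *)
case: (arg_maxnP (fun i : 'I_m => val i) sp) => i /andP[pi /eqP sip] imax.
have il : (i < l)%N.
  rewrite ltn_neqAle -ltnS lm ltn_ord andbT.
  by apply: contra_neq slp => /val_inj <-; rewrite sip.
have i1m : (i.+1 < m)%N by move: il; rewrite -ltnS lm.
exists i; rewrite inE; apply/existsP.
  exists (Ordinal i1m); rewrite /= eqxx /= sip.
  apply/negP => /eqP spi1; have := imax (Ordinal i1m).
  by rewrite /same_sign_after_p /= ltnW // -spi1 eqxx ltnn => /(_ isT).
case=> j /andP[/eqP ji]; rewrite !freeze_after_ge ?eqxx // ji; exact: ltnW.
Qed.

Lemma minimal_pattern_last_sign c s (p l : 'I_m) :
  l.+1 = m -> compat c s -> (changes s <= Sminus c)%N ->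
  (forall j : 'I_m, (p < j)%N -> c 0 j = 0) -> s l = s p.
Proof.
move=> lm cs minimal vanish; apply/eqP/negP => /negP /(changes_freeze_after_lt lm).
by rewrite ltnNge (leq_trans minimal) // Sminus_le // compat_freeze_after.
Qed.

Lemma last_nonzero_coord c : (0 < Sminus c)%N ->
  exists p : 'I_m, c 0 p != 0 /\ forall j : 'I_m, (p < j)%N -> c 0 j = 0.
Proof.
move=> Sminus_gt0; have [[i ci] | c0] := pselect (exists i, c 0 i != 0); last first.
  suff /Sminus_le : compat c [ffun=> true].
    by rewrite changes_const leqNgt Sminus_gt0.
  apply/compatP => i; split=> ci; exfalso; apply: c0; exists i.
    exact: lt0r_neq0.
  exact: ltr0_neq0.
case: (arg_maxnP (fun i : 'I_m => val i) (P := fun i => c 0 i != 0) ci)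
  => p cp pmax.
exists p; split=> // j pj; apply: contraTeq pj => cj.
by rewrite -leqNgt; exact: pmax.
Qed.

Definition strictly_signed c s := forall i, if s i then 0 < c 0 i else c 0 i < 0.

Lemma compat_strictly_signed c s t : strictly_signed c s -> compat c t <-> t = s.
Proof.
move=> cs; split=> [/compatP ct | ->].
  apply/ffunP => i; have := cs i; have [pos neg] := ct i.
  by case: (s i) => [/pos | /neg /negbTE].
apply/compatP => i; have := cs i.
by case: (s i) => ci; split=> // ci'; have := lt_trans ci ci'; rewrite ltxx.
Qed.

Lemma Splus_strictly_signed c s : strictly_signed c s -> Splus c = changes s.
Proof.
move=> cs; apply/eqP.
rewrite eqn_leq changes_le_Splus ?andbT ?(compat_strictly_signed _ cs) //.
by apply/bigmax_leqP => t /(compat_strictly_signed _ cs) ->.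
Qed.

End SignVariation.

Section CrookedConditions.
Variables (R : realType) (m k : nat) (l : 'I_m).
Hypotheses (lm : l.+1 = m) (k_gt0 : (0 < k)%N).
Implicit Types c : 'rV[R]_m.

Definition open_crooked c := (Splus c <= k)%N /\ (Splus c = k -> last_plus_pos c).

Definition closed_crooked c :=
  (Sminus c <= k)%N /\ (Sminus c = k -> last_nonzero_pos c).

Lemma closed_crooked_keeps_signs c c' :
  keeps_signs c c' -> open_crooked c' -> closed_crooked c.
Proof.
move=> cc' [Splus_le_k Splus_eq_k].
have Sminus_le_Splus : (Sminus c <= Splus c')%N.
  have /(compat_keeps_signs cc') := compat_sign_pattern c'.
  by move/Sminus_le/leq_trans; apply; exact/changes_le_Splus/compat_sign_pattern.
split=> [|Sminus_eq_k]; first exact: leq_trans Splus_le_k.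
have Splus_eq : Splus c' = k.
  by apply/eqP; rewrite eqn_leq Splus_le_k -Sminus_eq_k.
have [s [c's s_eq sl]] := Splus_eq_k Splus_eq.
have [p [cp vanish]] :=
  last_nonzero_coord (leq_trans k_gt0 (eq_leq (esym Sminus_eq_k))).
have cs := compat_keeps_signs cc' c's.
have sp : s p.
  rewrite -(minimal_pattern_last_sign lm cs _ vanish) ?sl //.
  by rewrite s_eq Splus_eq Sminus_eq_k.
exists p; split=> //; have /compatP/(_ p) [_ neg] := cs.
have [//|cneg|c0] := ltgtP 0 (c 0 p); first by move: (neg cneg); rewrite sp.
by rewrite -c0 eqxx in cp.
Qed.

Lemma open_crooked_perturb c :
  closed_crooked c -> exists d, forall e, 0 < e -> open_crooked (c + e *: d).
Proof.
move=> [Sminus_le_k Sminus_eq_k].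
have [t ct t_min] := Sminus_attained c.
have tl : Sminus c = k -> t l.
  move=> /Sminus_eq_k [p [cp vanish]].
  rewrite (minimal_pattern_last_sign lm ct _ vanish) ?t_min //.
  by have /compatP/(_ p) [pos _] := ct; exact: pos.
pose d := \row_i (if c 0 i == 0 then (if t i then 1 else -1) else 0) : 'rV[R]_m.
exists d => e e0.
have signed : strictly_signed (c + e *: d) t.
  move=> i; rewrite !mxE; have /compatP/(_ i) [pos neg] := ct.
  have [->|ci] := eqVneq (c 0 i) 0.
    by rewrite add0r; case: (t i); rewrite ?mulr1 ?mulrN1 ?oppr_lt0.
  rewrite mulr0 addr0.
  have [cpos|cneg|c0] := ltgtP 0 (c 0 i); first by rewrite pos.
    by rewrite (negbTE (neg cneg)).
  by rewrite -c0 eqxx in ci.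
rewrite /open_crooked (Splus_strictly_signed signed) t_min.
split=> // /tl tl'; exists t; split.
- exact/(compat_strictly_signed _ signed).
- by rewrite (Splus_strictly_signed signed).
- by move=> i im; have -> : i = l by apply/val_inj/succn_inj; rewrite im lm.
Qed.

End CrookedConditions.

Section Topology.
Variables (R : realType) (m : nat).

Lemma coord_mulmx_continuous (A : 'M[R]_m) (i : 'I_m) :
  continuous (fun x : 'rV[R^o]_m => (x *m A) 0 i).
Proof.
have -> : (fun x : 'rV[R^o]_m => (x *m A) 0 i) = fun x => \sum_j x 0 j * A j i.
  by apply/funext => x; rewrite mxE.
apply: continuous_big => [|j _]; first exact: add_continuous.
by move=> x; apply: cvgMr_tmp; [exact: nbhs_filter | exact: coord_continuous].
Qed.

Lemma near_keeps_signs (A : 'M[R]_m) (v : 'rV[R^o]_m) :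
  \forall x \near v, keeps_signs (v *m A) (x *m A).
Proof.
suff near_i i : \forall x \near v,
    (0 < (v *m A) 0 i -> 0 < (x *m A) 0 i) /\
    ((v *m A) 0 i < 0 -> (x *m A) 0 i < 0).
  exact: filter_forall near_i.
have cont := @coord_mulmx_continuous A i v.
have pos : \forall x \near v, 0 < (v *m A) 0 i -> 0 < (x *m A) 0 i.
  have [vi|vi] := ltP 0 ((v *m A) 0 i); last by near=> x.
  by near=> x => _; near: x; exact: cvgr_gt _ cont _ vi.
have neg : \forall x \near v, (v *m A) 0 i < 0 -> (x *m A) 0 i < 0.
  have [vi|vi] := ltP ((v *m A) 0 i) 0; last by near=> x.
  by near=> x => _; near: x; exact: cvgr_lt _ cont _ vi.
exact: filterI pos neg.
Unshelve. all: by end_near. Qed.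

Lemma ray_meets_nbhs (v w : 'rV[R^o]_m) (B : set 'rV[R^o]_m) :
  nbhs v B -> exists2 t : R, 0 < t & B (v + t *: w).
Proof.
move=> vB; have ray_cvg : (v + t *: w) @[t --> (0 : R)^'+] --> v.
  rewrite -[X in _ --> X]addr0 -(scale0r w); apply: (cvgD (cvg_cst v)).
  by apply: (cvgZr_tmp (s := id)); apply: cvg_within_filter; exact: cvg_id.
have : \forall t \near (0 : R)^'+, 0 < t /\ B (v + t *: w).
  by near=> t; split; near: t; [exact: nbhs_right_gt | exact: ray_cvg].
by case/filter_ex => t [t0 tB]; exists t.
Unshelve. all: by end_near. Qed.

End Topology.

Theorem lemma5p2 (R : realType) (n : nat) (E : 'M[R]_(dimn n)) :
  (0 < n)%N -> is_J_basis E -> pos_oriented E ->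
  closure (open_crooked_halfspace E : set 'rV[R^o]_(dimn n)) = closed_crooked_halfspace E.
Proof.
move=> n_gt0 [E_unit _] _.
have last_lt : ((dimn n).-1 < dimn n)%N by rewrite prednK // /dimn; lia.
have lm : (Ordinal last_lt).+1 = dimn n by rewrite /= prednK // /dimn; lia.
have k_gt0 : (0 < 2 * n - 1)%N by lia.
rewrite eqEsubset; split=> v hv.
- have [x [Hx near_x]] := hv _ (near_keeps_signs (invmx E) v).
  exact: (closed_crooked_keeps_signs (k := (2 * n - 1)%N) lm k_gt0 near_x Hx).
- have [d perturb] := open_crooked_perturb lm hv.
  move=> B /(ray_meets_nbhs (d *m E)) [t t_gt0 Bt].
  exists (v + t *: (d *m E)); split=> //.
  rewrite /open_crooked_halfspace /= /coords mulmxDl -scalemxAl mulmxK //.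
  exact: perturb.
Qed.
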